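(* Let $\sigma_i:\mathbb{R}\to\mathbb{R}$ be a function that is bounded, twice continuously differentiable, has strictly positive first derivative at every point, has exactly one inflection point, located at $0$, satisfies $\sigma_i(0)=0$, $\sigma_i'(0)=1$, is Lipschitz continuous with Lipschitz constant $1$, and satisfies $\sigma_i(v)\in[-1,1]$ for all $v\in\mathbb{R}$. For $v_i,\Delta v_i\in\mathbb{R}$ define $\Delta s_i=\sigma_i(v_i+\Delta v_i)-\sigma_i(v_i)$. Then there exists a continuous, strictly monotonically decreasing function $\bar v_i:(0,1)\to(0,+\infty)$ with $\bar v_i(\lambda)\to+\infty$ as $\lambda\to0^+$ and $\bar v_i(\lambda)\to0$ as $\lambda\to1^-$, such that for every $\lambda_i\in(0,1)$, $$(\Delta v_i-\Delta s_i)(\Delta s_i-\lambda_i\Delta v_i)\geq 0$$ for all pairs $(v_i,v_i+\Delta v_i)\in[-\bar v_i(\lambda_i),\bar v_i(\lambda_i)]^2$. Moreover, for $\lambda_i=0$ the inequality $(\Delta v_i-\Delta s_i)\Delta s_i\geq0$ holds for all $(v_i,v_i+\Delta v_i)\in\mathbb{R}^2$. *)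

From Stdlib Require Import Reals.
From Coquelicot Require Import Coquelicot.
Open Scope R_scope.

Definition convex_on (f : R -> R) (a b : R) : Prop :=
  forall x y t, a <= x <= b -> a <= y <= b -> 0 <= t <= 1 ->
    f (t * x + (1 - t) * y) <= t * f x + (1 - t) * f y.

Definition concave_on (f : R -> R) (a b : R) : Prop :=
  convex_on (fun x => - f x) a b.

Definition inflection_point (f : R -> R) (x : R) : Prop :=
  exists d, 0 < d /\
    ((convex_on f (x - d) x /\ concave_on f x (x + d)) \/
     (concave_on f (x - d) x /\ convex_on f x (x + d))).

From Stdlib Require Import Reals Lra ClassicalEpsilon.
From Coquelicot Require Import Coquelicot.
Open Scope R_scope.

(* By the mean value theorem, Δs = σ'(c) Δv for some c between v and v + Δv, so
   (Δv - Δs)(Δs - λ Δv) = (1 - σ'(c)) (σ'(c) - λ) Δv².  The Lipschitz bound gives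
   σ' <= 1 and σ' > 0 settles λ = 0; for λ in (0,1) it remains to find v̄ with
   σ' >= λ on [-v̄(λ), v̄(λ)].  Let m(v) be the minimum of σ' on [-|v|, |v|].  Then
   h(v) = m(v) / (1 + |v|) is continuous, positive, h(0) = 1, and on [0, +oo) it
   is strictly decreasing with limit 0; v̄ := h⁻¹ on (0,1) inherits continuity,
   monotonicity and both limits, and σ' >= m(v̄(λ)) >= h(v̄(λ)) = λ on the
   interval. *)

Section BallMinimum.

Variable d : R -> R.
Hypothesis d_cont : forall x, continuity_pt d x.

Definition ball_argmin (r : R) : R :=
  epsilon (inhabits 0)
    (fun x => Rabs x <= Rabs r /\ forall y, Rabs y <= Rabs r -> d x <= d y).

Definition ball_min (r : R) : R := d (ball_argmin r).

Lemma ball_argmin_spec r :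
  Rabs (ball_argmin r) <= Rabs r /\
  forall y, Rabs y <= Rabs r -> d (ball_argmin r) <= d y.
Proof.
  unfold ball_argmin; apply epsilon_spec.
  destruct (continuity_ab_min d (- Rabs r) (Rabs r)) as [x [Hmin Hx]].
  - pose proof (Rabs_pos r); lra.
  - intros c _; apply d_cont.
  - exists x; split; [now apply Rabs_le_between|].
    intros y Hy; apply Hmin, Rabs_le_between, Hy.
Qed.

Lemma ball_min_le r y : Rabs y <= Rabs r -> ball_min r <= d y.
Proof. apply ball_argmin_spec. Qed.

Lemma ball_min_ge r L : (forall x, Rabs x <= Rabs r -> L <= d x) -> L <= ball_min r.
Proof. intros HL; apply HL, ball_argmin_spec. Qed.

Lemma ball_min_antimono r s : Rabs r <= Rabs s -> ball_min s <= ball_min r.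
Proof. intros Hrs; apply ball_min_ge; intros x Hx; apply ball_min_le; lra. Qed.

Lemma ball_min_extend r s L :
  L <= ball_min r -> (forall x, Rabs r <= Rabs x <= Rabs s -> L <= d x) ->
  L <= ball_min s.
Proof.
  intros Hr Hannulus; apply ball_min_ge; intros x Hx.
  destruct (Rle_or_lt (Rabs x) (Rabs r)) as [Hin|Hout].
  - apply Rle_trans with (ball_min r); [exact Hr|now apply ball_min_le].
  - apply Hannulus; lra.
Qed.

Lemma close_value_at_radius r0 eps : 0 < eps ->
  exists delta, 0 < delta /\
    forall x t, 0 <= t -> Rabs (t - r0) < delta -> Rabs (Rabs x - r0) < delta ->
      exists y, Rabs y = t /\ Rabs (d x - d y) < eps.
Proof.
  intros Heps.
  assert (Hloc : forall c, exists delta, 0 < delta /\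
            forall x, Rabs (x - c) < delta -> Rabs (d x - d c) < eps / 2).
  { intros c.
    destruct (proj1 (filterlim_locally d (d c))
                (proj1 (continuity_pt_filterlim d c) (d_cont c))
                (mkposreal _ (eps2_Rgt_R0 _ Heps))) as [delta Hdelta].
    exists delta; split; [apply cond_pos|]; exact Hdelta. }
  destruct (Hloc r0) as [d1 [Hd1 Hr0]]; destruct (Hloc (- r0)) as [d2 [Hd2 Hmr0]].
  exists (Rmin d1 d2); split; [now apply Rmin_glb_lt|].
  pose proof (Rmin_l d1 d2); pose proof (Rmin_r d1 d2).
  intros x t Ht Htr Hxr.
  destruct (Rle_or_lt 0 x) as [Hx|Hx].
  - rewrite (Rabs_pos_eq x) in Hxr by lra.
    exists t; split; [now apply Rabs_pos_eq|].
    assert (Hx0 : Rabs (d x - d r0) < eps / 2) by (apply Hr0; lra).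
    assert (Ht0 : Rabs (d t - d r0) < eps / 2) by (apply Hr0; lra).
    apply Rabs_def2 in Hx0; apply Rabs_def2 in Ht0; apply Rabs_def1; lra.
  - rewrite (Rabs_left x) in Hxr by lra.
    exists (- t); split; [now rewrite Rabs_Ropp, Rabs_pos_eq|].
    assert (Hx0 : Rabs (d x - d (- r0)) < eps / 2).
    { apply Hmr0; rewrite <- Rabs_Ropp.
      replace (- (x - - r0)) with (- x - r0) by ring; lra. }
    assert (Ht0 : Rabs (d (- t) - d (- r0)) < eps / 2).
    { apply Hmr0; rewrite <- Rabs_Ropp.
      replace (- (- t - - r0)) with (t - r0) by ring; lra. }
    apply Rabs_def2 in Hx0; apply Rabs_def2 in Ht0; apply Rabs_def1; lra.
Qed.

(* Points between the spheres of radii |r| and |r0| have d-values close to those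
   on the inner sphere, by continuity of d at |r0| and -|r0|. *)
Lemma ball_min_continuous r0 : continuity_pt ball_min r0.
Proof.
  apply continuity_pt_filterlim, filterlim_locally; intros eps.
  destruct (close_value_at_radius (Rabs r0) (eps / 2)) as [delta [Hdelta Hclose]].
  { pose proof (cond_pos eps); lra. }
  exists (mkposreal delta Hdelta); intros r Hr.
  change (Rabs (r - r0) < delta) in Hr; change (Rabs (ball_min r - ball_min r0) < eps).
  assert (Hrr : Rabs (Rabs r - Rabs r0) < delta).
  { eapply Rle_lt_trans; [apply Rabs_triang_inv2|exact Hr]. }
  apply Rabs_def2 in Hrr.
  pose proof (cond_pos eps); pose proof (Rabs_pos r0).
  destruct (Rle_or_lt (Rabs r0) (Rabs r)) as [Hle|Hlt].
  - assert (ball_min r0 - eps / 2 <= ball_min r).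
    { apply ball_min_extend with r0; [lra|]. intros x Hx.
      destruct (Hclose x (Rabs r0)) as [y [Hy Hxy]];
        [lra|rewrite Rminus_diag, Rabs_R0; lra|apply Rabs_def1; lra|].
      assert (ball_min r0 <= d y) by (apply ball_min_le; lra).
      apply Rabs_def2 in Hxy; lra. }
    pose proof (ball_min_antimono r0 r Hle); apply Rabs_def1; lra.
  - assert (ball_min r - eps / 2 <= ball_min r0).
    { apply ball_min_extend with r; [lra|]. intros x Hx.
      destruct (Hclose x (Rabs r)) as [y [Hy Hxy]];
        [apply Rabs_pos|apply Rabs_def1; lra|apply Rabs_def1; lra|].
      assert (ball_min r <= d y) by (apply ball_min_le; lra).
      apply Rabs_def2 in Hxy; lra. }
    pose proof (ball_min_antimono r r0 (Rlt_le _ _ Hlt)); apply Rabs_def1; lra.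
Qed.

End BallMinimum.

Section DecreasingInverse.

Variable h : R -> R.
Hypothesis h_cont : continuity h.
Hypothesis h_decr : forall a b, 0 <= a -> a < b -> h b < h a.
Hypothesis h_0 : h 0 = 1.
Hypothesis h_pos : forall v, 0 < h v.
Hypothesis h_vanish : forall l, 0 < l -> exists w, 0 <= w /\ h w < l.

Definition decr_inv (l : R) : R := epsilon (inhabits 0) (fun v => 0 <= v /\ h v = l).

Lemma decr_inv_spec l : 0 < l < 1 -> 0 <= decr_inv l /\ h (decr_inv l) = l.
Proof.
  intros Hl; unfold decr_inv; apply epsilon_spec.
  destruct (h_vanish l) as [w [Hw Hhw]]; [lra|].
  destruct (IVT_gen h 0 w l h_cont) as [v [Hv Hhv]].
  - rewrite Rmin_right, Rmax_left; lra.
  - exists v; split; [|exact Hhv]. rewrite Rmin_left in Hv; lra.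
Qed.

Let h_le_1 : forall v, 0 <= v -> h v <= 1.
Proof. intros v [Hv|<-]; [rewrite <- h_0; left; now apply h_decr|lra]. Qed.

Lemma decr_inv_lt l w : 0 < l < 1 -> 0 <= w -> h w < l -> decr_inv l < w.
Proof.
  intros Hl Hw Hhw; destruct (decr_inv_spec l Hl) as [Hv Hhv].
  destruct (Rlt_or_le (decr_inv l) w) as [|[Hlt|Heq]]; [easy| |].
  - pose proof (h_decr w _ Hw Hlt); lra.
  - rewrite <- Heq in Hhv; lra.
Qed.

Lemma lt_decr_inv l w : 0 < l < 1 -> 0 <= w -> l < h w -> w < decr_inv l.
Proof.
  intros Hl Hw Hhw; destruct (decr_inv_spec l Hl) as [Hv Hhv].
  destruct (Rlt_or_le w (decr_inv l)) as [|[Hlt|Heq]]; [easy| |].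
  - pose proof (h_decr _ w Hv Hlt); lra.
  - rewrite Heq in Hhv; lra.
Qed.

Lemma decr_inv_pos l : 0 < l < 1 -> 0 < decr_inv l.
Proof. intros Hl; apply lt_decr_inv; [easy|lra|rewrite h_0; lra]. Qed.

Lemma decr_inv_decr l1 l2 : 0 < l1 < 1 -> 0 < l2 < 1 -> l1 < l2 ->
  decr_inv l2 < decr_inv l1.
Proof.
  intros Hl1 Hl2 H12; destruct (decr_inv_spec l2 Hl2) as [Hv Hhv].
  apply lt_decr_inv; [easy|easy|lra].
Qed.

Lemma decr_inv_continuous l0 : 0 < l0 < 1 -> continuous decr_inv l0.
Proof.
  intros Hl0; apply filterlim_locally; intros eps.
  pose proof (decr_inv_pos l0 Hl0) as Hv0; pose proof (cond_pos eps).
  set (v0 := decr_inv l0) in *.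
  pose proof (Rmin_l (eps / 2) (v0 / 2)); pose proof (Rmin_r (eps / 2) (v0 / 2)).
  assert (He : 0 < Rmin (eps / 2) (v0 / 2)) by (apply Rmin_glb_lt; lra).
  set (e := Rmin (eps / 2) (v0 / 2)) in *.
  destruct (decr_inv_spec l0 Hl0) as [_ Hhv0]; fold v0 in Hhv0.
  assert (Hlo : l0 < h (v0 - e)) by (rewrite <- Hhv0; apply h_decr; lra).
  assert (Hhi : h (v0 + e) < l0) by (rewrite <- Hhv0; apply h_decr; lra).
  assert (Hgap : 0 < Rmin (h (v0 - e) - l0) (l0 - h (v0 + e)))
    by (apply Rmin_glb_lt; lra).
  exists (mkposreal _ Hgap); intros l Hl.
  change (Rabs (l - l0) < Rmin (h (v0 - e) - l0) (l0 - h (v0 + e))) in Hl.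
  change (Rabs (decr_inv l - v0) < eps).
  pose proof (Rmin_l (h (v0 - e) - l0) (l0 - h (v0 + e))).
  pose proof (Rmin_r (h (v0 - e) - l0) (l0 - h (v0 + e))).
  apply Rabs_def2 in Hl.
  pose proof (h_pos (v0 + e)); pose proof (h_le_1 (v0 - e)).
  assert (Hl' : 0 < l < 1) by lra.
  pose proof (decr_inv_lt l (v0 + e) Hl'); pose proof (lt_decr_inv l (v0 - e) Hl').
  apply Rabs_def1; lra.
Qed.

Lemma decr_inv_at_right_0 : filterlim decr_inv (at_right 0) (Rbar_locally p_infty).
Proof.
  intros P [M HM]. pose proof (Rle_abs M); pose proof (Rabs_pos M).
  exists (mkposreal _ (h_pos (Rabs M))); intros l Hl Hl0.
  change (Rabs (l - 0) < h (Rabs M)) in Hl.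
  rewrite Rminus_0_r, Rabs_pos_eq in Hl by lra.
  pose proof (h_le_1 (Rabs M) (Rabs_pos M)).
  apply HM; apply Rle_lt_trans with (Rabs M); [easy|apply lt_decr_inv; lra].
Qed.

Lemma decr_inv_at_left_1 : filterlim decr_inv (at_left 1) (locally 0).
Proof.
  apply filterlim_locally; intros eps; pose proof (cond_pos eps).
  assert (Hw : h (eps / 2) < 1) by (rewrite <- h_0; apply h_decr; lra).
  assert (Hgap : 0 < 1 - h (eps / 2)) by lra.
  exists (mkposreal _ Hgap); intros l Hl Hl1.
  change (Rabs (l - 1) < 1 - h (eps / 2)) in Hl.
  change (Rabs (decr_inv l - 0) < eps).
  rewrite Rabs_left in Hl by lra. pose proof (h_pos (eps / 2)).
  assert (Hl' : 0 < l < 1) by lra.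
  pose proof (decr_inv_pos l Hl'); pose proof (decr_inv_lt l (eps / 2) Hl').
  rewrite Rminus_0_r, Rabs_pos_eq; lra.
Qed.

End DecreasingInverse.

Section DampedBallMinimum.

Variable d : R -> R.
Hypothesis d_pos : forall x, 0 < d x.
Hypothesis d_cont : forall x, continuity_pt d x.
Hypothesis d_0 : d 0 = 1.

Definition damped_ball_min (v : R) : R := ball_min d v / (1 + Rabs v).

Lemma damped_ball_min_continuous : continuity damped_ball_min.
Proof.
  intros v; apply (continuity_pt_div _ (fun v => 1 + Rabs v)).
  - now apply ball_min_continuous.
  - apply continuity_pt_plus; [|apply Rcontinuity_abs].
    apply continuity_pt_const; now intros ? ?.
  - pose proof (Rabs_pos v); lra.
Qed.

Lemma damped_ball_min_pos v : 0 < damped_ball_min v.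
Proof. apply Rdiv_lt_0_compat; [apply d_pos|pose proof (Rabs_pos v); lra]. Qed.

Lemma damped_ball_min_decr a b : 0 <= a -> a < b ->
  damped_ball_min b < damped_ball_min a.
Proof.
  intros Ha Hab; unfold damped_ball_min.
  rewrite (Rabs_pos_eq a), (Rabs_pos_eq b) by lra.
  assert (Hmin : ball_min d b <= ball_min d a).
  { apply (ball_min_antimono d d_cont); rewrite !Rabs_pos_eq; lra. }
  pose proof (d_pos (ball_argmin d b)).
  apply Rlt_le_trans with (ball_min d b / (1 + a)).
  - apply Rmult_lt_compat_l; [easy|apply Rinv_lt_contravar; nra].
  - apply Rmult_le_compat_r; [left; apply Rinv_0_lt_compat; lra|easy].
Qed.

Lemma damped_ball_min_0 : damped_ball_min 0 = 1.
Proof.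
  unfold damped_ball_min; rewrite Rabs_R0, Rplus_0_r, Rdiv_1_r.
  apply Rle_antisym.
  - rewrite <- d_0; apply (ball_min_le d d_cont); lra.
  - apply (ball_min_ge d d_cont); intros x Hx.
    rewrite Rabs_R0 in Hx; rewrite (Rabs_eq_0 x); [lra|].
    apply Rle_antisym; [easy|apply Rabs_pos].
Qed.

Lemma damped_ball_min_le v x : Rabs x <= Rabs v -> damped_ball_min v <= d x.
Proof.
  intros Hx; unfold damped_ball_min.
  pose proof (ball_min_le d d_cont v x Hx); pose proof (d_pos (ball_argmin d v)).
  pose proof (Rabs_pos v).
  apply Rle_div_l; [lra|]. unfold ball_min in *; nra.
Qed.

Lemma damped_ball_min_vanish l : 0 < l -> exists w, 0 <= w /\ damped_ball_min w < l.
Proof.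
  intros Hl; exists (/ l); split; [left; now apply Rinv_0_lt_compat|].
  unfold damped_ball_min; rewrite Rabs_pos_eq by (left; now apply Rinv_0_lt_compat).
  assert (Hmin : ball_min d (/ l) <= 1).
  { rewrite <- d_0; apply (ball_min_le d d_cont); rewrite Rabs_R0; apply Rabs_pos. }
  apply Rlt_div_l; [pose proof (Rinv_0_lt_compat l Hl); lra|].
  rewrite Rmult_plus_distr_l, Rinv_r; lra.
Qed.

End DampedBallMinimum.

Lemma exists_sector_radius (d : R -> R) :
  (forall x, 0 < d x) -> (forall x, continuity_pt d x) -> d 0 = 1 ->
  exists vbar : R -> R,
    (forall l, 0 < l < 1 -> 0 < vbar l) /\
    (forall l, 0 < l < 1 -> continuous vbar l) /\
    (forall l1 l2, 0 < l1 < 1 -> 0 < l2 < 1 -> l1 < l2 -> vbar l2 < vbar l1) /\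
    filterlim vbar (at_right 0) (Rbar_locally p_infty) /\
    filterlim vbar (at_left 1) (locally 0) /\
    (forall l, 0 < l < 1 -> forall x, - vbar l <= x <= vbar l -> l <= d x).
Proof.
  intros d_pos d_cont d_0.
  pose proof (damped_ball_min_continuous d d_cont) as h_cont.
  pose proof (damped_ball_min_decr d d_pos d_cont) as h_decr.
  pose proof (damped_ball_min_0 d d_cont d_0) as h_0.
  pose proof (damped_ball_min_pos d d_pos) as h_pos.
  pose proof (damped_ball_min_vanish d d_cont d_0) as h_vanish.
  exists (decr_inv (damped_ball_min d)).
  split; [intros; apply decr_inv_pos; auto|].
  split; [intros; apply decr_inv_continuous; auto|].
  split; [intros; apply decr_inv_decr; auto|].
  split; [apply decr_inv_at_right_0; auto|].
  split; [apply decr_inv_at_left_1; auto|].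
  intros l Hl x Hx.
  destruct (decr_inv_spec _ h_cont h_0 h_vanish l Hl) as [Hv <-].
  apply (damped_ball_min_le d d_pos d_cont).
  rewrite (Rabs_pos_eq (decr_inv _ l)) by easy. now apply Rabs_le.
Qed.

Lemma is_derive_Rabs_le_lipschitz (f : R -> R) (k x l : R) :
  (forall x y, Rabs (f x - f y) <= k * Rabs (x - y)) -> is_derive f x l -> Rabs l <= k.
Proof.
  intros Hlip Hd; apply is_derive_Reals in Hd.
  apply Rnot_lt_le; intros Hk.
  destruct (Hd (Rabs l - k)) as [delta Hdelta]; [lra|].
  pose proof (cond_pos delta).
  assert (Hh : 0 < delta / 2) by lra.
  specialize (Hdelta (delta / 2) ltac:(lra) ltac:(rewrite Rabs_pos_eq; lra)).
  assert (Hq : Rabs ((f (x + delta / 2) - f x) / (delta / 2)) <= k).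
  { rewrite Rabs_div, (Rabs_pos_eq (delta / 2)) by lra.
    apply Rle_div_l; [lra|].
    replace (delta / 2) with (Rabs (x + delta / 2 - x)) at 2
      by (rewrite Rabs_pos_eq; lra).
    apply Hlip. }
  pose proof (Rabs_triang_inv l ((f (x + delta / 2) - f x) / (delta / 2))).
  rewrite <- Rabs_Ropp, Ropp_minus_distr in Hdelta. lra.
Qed.

Lemma sector_condition (f : R -> R) (l v dv : R) :
  (forall c, Rmin v (v + dv) <= c <= Rmax v (v + dv) ->
     ex_derive f c /\ l <= Derive f c <= 1) ->
  (dv - (f (v + dv) - f v)) * ((f (v + dv) - f v) - l * dv) >= 0.
Proof.
  intros Hf.
  destruct (MVT_gen f v (v + dv) (Derive f)) as [c [Hc Hinc]].
  - intros x Hx; apply Derive_correct, Hf; lra.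
  - intros x Hx; apply continuity_pt_filterlim.
    apply (ex_derive_continuous (K := R_AbsRing) (V := R_NormedModule)), Hf, Hx.
  - destruct (Hf c Hc) as [_ Hs].
    rewrite Hinc; replace (v + dv - v) with dv by ring.
    replace ((dv - Derive f c * dv) * (Derive f c * dv - l * dv))
      with ((1 - Derive f c) * (Derive f c - l) * (dv * dv)) by ring.
    apply Rle_ge, Rmult_le_pos; [apply Rmult_le_pos; lra|apply Rle_0_sqr].
Qed.

Theorem lemma2 (sigma : R -> R)
  (Hbounded : exists M, forall v, Rabs (sigma v) <= M)
  (Hd1 : forall v, ex_derive sigma v)
  (Hd2 : forall v, ex_derive (Derive sigma) v)
  (Hd2c : forall v, continuous (Derive (Derive sigma)) v)
  (Hpos : forall v, 0 < Derive sigma v)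
  (Hinfl : forall v, inflection_point sigma v <-> v = 0)
  (H0 : sigma 0 = 0)
  (Hd0 : Derive sigma 0 = 1)
  (Hlip : forall x y, Rabs (sigma x - sigma y) <= Rabs (x - y))
  (Hrange : forall v, -1 <= sigma v <= 1) :
  (exists vbar : R -> R,
     (forall l, 0 < l < 1 -> 0 < vbar l) /\
     (forall l, 0 < l < 1 -> continuous vbar l) /\
     (forall l1 l2, 0 < l1 < 1 -> 0 < l2 < 1 -> l1 < l2 -> vbar l2 < vbar l1) /\
     filterlim vbar (at_right 0) (Rbar_locally p_infty) /\
     filterlim vbar (at_left 1) (locally 0) /\
     (forall l, 0 < l < 1 ->
        forall v dv,
          - vbar l <= v <= vbar l ->
          - vbar l <= v + dv <= vbar l ->
          (dv - (sigma (v + dv) - sigma v)) *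
          ((sigma (v + dv) - sigma v) - l * dv) >= 0)) /\
  (forall v dv,
     (dv - (sigma (v + dv) - sigma v)) * (sigma (v + dv) - sigma v) >= 0).
Proof.
  assert (Dcont : forall x, continuity_pt (Derive sigma) x).
  { intros x; apply continuity_pt_filterlim.
    apply (ex_derive_continuous (K := R_AbsRing) (V := R_NormedModule)), Hd2. }
  assert (Dle1 : forall x, Derive sigma x <= 1).
  { intros x; apply Rle_trans with (Rabs (Derive sigma x)); [apply Rle_abs|].
    apply (is_derive_Rabs_le_lipschitz sigma 1 x).
    - intros a b; rewrite Rmult_1_l; apply Hlip.
    - apply Derive_correct, Hd1. }
  destruct (exists_sector_radius (Derive sigma) Hpos Dcont Hd0)
    as [vbar (Hvpos & Hvcont & Hvdecr & Hv0 & Hv1 & Hvslope)].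
  split.
  - exists vbar; do 5 (split; [assumption|]).
    intros l Hl v dv Hv Hvdv; apply sector_condition; intros c Hc.
    split; [apply Hd1|split; [|apply Dle1]].
    apply Hvslope; [easy|].
    unfold Rmin, Rmax in Hc; destruct (Rle_dec v (v + dv)); lra.
  - intros v dv.
    replace (sigma (v + dv) - sigma v) with (sigma (v + dv) - sigma v - 0 * dv) at 2
      by ring.
    apply sector_condition; intros c _.
    split; [apply Hd1|split; [left; apply Hpos|apply Dle1]].
Qed.
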